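(* Let $n\ge 1$, let $C_u(v_1),\ldots,C_u(v_n)>0$ and $R_1,\ldots,R_n>0$ be sustainable, i.e. $R_i\le C_u(v_i)$ for all $i$, $\sum_{j\ne i}R_j\le C_d(v_i)$ for all $i$ (for some downlink capacities $C_d(v_i)>0$), and $(n-1)\sum_{i=1}^n R_i\le\sum_{i=1}^n C_u(v_i)$. Then the output $r_{i,j}$ of the algorithm described in the context satisfies the Valid Partition Constraint: $\sum_{j=1}^n r_{i,j} = R_i$ for every $1\le i\le n$.
   Context: Sub-stream rate assigning algorithm. Input: $n$, uplink capacities $C_u(v_1),\ldots,C_u(v_n)$ and rates $R_1,\ldots,R_n$. Initialize $r_{i,j}:=0$ for all $1\le i,j\le n$ and $U_i := C_u(v_i)-R_i$ for $1\le i\le n$. Outer loop: for $i=1$ to $n$: set $R'_i := R_i$; inner loop: for $j=1$ to $n$: if $(n-2)R'_i > U_j$ then set $r_{i,j} := U_j/(n-2)$, else set $r_{i,j} := R'_i$; then set $U_j := U_j-(n-2)r_{i,j}$ and $R'_i := R'_i - r_{i,j}$; if $R'_i = 0$, exit the inner loop. Output all $r_{i,j}$. *)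

From mathcomp Require Import all_boot all_order all_algebra.
Set Implicit Arguments. Unset Strict Implicit. Unset Printing Implicit Defensive.
Import Order.TTheory GRing.Theory Num.Theory.
Local Open Scope ring_scope.

(* Peers are indexed 0..n-1 (the paper's
   v_1..v_n).  Rates and capacities are functions nat -> R; only indices < n
   are used.  r i j is the rate of peer i's sub-stream relayed by peer j. *)
Section Algo.
Variable R : realFieldType.

(* The inner loop for a fixed i: iterate j over js with current remaining
   rate Rp and current residual capacities U.  Returns (row r_{i,.}, new U).
   Entries not assigned stay 0 (their initial value). *)
Fixpoint sub_inner (n : nat) (js : seq nat) (Rp : R) (U : nat -> R)
  : (nat -> R) * (nat -> R) :=
  match js with
  | [::] => (fun _ => 0, U)
  | j :: js' =>
      let r := if U j < (n%:R - 2) * Rp then U j / (n%:R - 2) else Rp in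
      let U' := fun k => if k == j then U j - (n%:R - 2) * r else U k in
      let Rp' := Rp - r in
      let res := if Rp' == 0 then (fun _ => 0, U') else sub_inner n js' Rp' U' in
      (fun k => if k == j then r else res.1 k, res.2)
  end.

Fixpoint sub_outer (n : nat) (Rs : nat -> R) (ids : seq nat) (U : nat -> R)
  : (nat -> nat -> R) * (nat -> R) :=
  match ids with
  | [::] => (fun _ _ => 0, U)
  | i :: ids' =>
      let p := sub_inner n (iota 0 n) (Rs i) U in
      let res := sub_outer n Rs ids' p.2 in
      (fun k => if k == i then p.1 else res.1 k, res.2)
  end.

Definition substream_rates (n : nat) (Cu Rs : nat -> R) : nat -> nat -> R :=
  (sub_outer n Rs (iota 0 n) (fun j => Cu j - Rs j)).1.

End Algo.

(* In the pass for peer i, relay j takes the whole rate R' still to be placed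
   unless (n - 2) R' > U_j, in which case it takes U_j / (n - 2) and U_j drops
   to 0; this can only happen when n > 2.  Hence a pass assigns all of R_i
   unless it empties every residual capacity.  Each pass lowers sum_j U_j by
   exactly (n - 2) times what it assigns, so (n - 2) * (sum of the rates still
   to be served) <= sum_j U_j is preserved; initially this is the aggregate
   constraint (n - 1) sum_i R_i <= sum_i C_u(v_i).  A pass that empties all
   capacity has thus assigned at least sum_j U_j / (n - 2) >= R_i, i.e. exactly
   R_i.  Besides the aggregate constraint only R_i <= C_u(v_i), which makes the
   initial U_j nonnegative, is needed. *)

From mathcomp Require Import all_boot all_order all_algebra lra.
Import Order.TTheory GRing.Theory Num.Theory.
Set Implicit Arguments. Unset Strict Implicit. Unset Printing Implicit Defensive.
Local Open Scope ring_scope.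

Section Relay.
Variable R : realFieldType.
Implicit Types (c u p : R).

Definition relay_rate c u p : R := if u < c * p then u / c else p.

Lemma relay_rate_bounds c u p : 0 <= u -> 0 <= p ->
  relay_rate c u p <= p /\ 0 <= u - c * relay_rate c u p.
Proof.
rewrite /relay_rate => u0 p0; case: ltP => [ucp | cpu]; last by split; lra.
have c0 : 0 < c by case: (ltrP 0 c) => // c_le0; nra.
rewrite [c * _]mulrC divfK ?gt_eqF // subrr; split => //.
by rewrite ler_pdivrMr // mulrC ltW.
Qed.

Lemma relay_rate_saturates c u p : 0 <= u -> 0 <= p -> relay_rate c u p != p ->
  0 < c /\ u - c * relay_rate c u p = 0.
Proof.
rewrite /relay_rate => u0 p0; case: ltP => [ucp _ | _]; last by rewrite eqxx.
have c0 : 0 < c by case: (ltrP 0 c) => // c_le0; nra.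
by rewrite [c * _]mulrC divfK ?gt_eqF // subrr.
Qed.

End Relay.

Section InnerLoop.
Variables (R : realFieldType) (n : nat).
Local Notation c := (n%:R - 2 : R).
Local Notation inner := (@sub_inner R n).
Implicit Types (js : seq nat) (Rp : R) (U : nat -> R).

Lemma sub_inner_notin js Rp U k : k \notin js ->
  (inner js Rp U).1 k = 0 /\ (inner js Rp U).2 k = U k.
Proof.
elim: js Rp U => [|j js IH] Rp U //=.
rewrite inE negb_or => /andP[/negbTE kj kjs]; rewrite kj.
rewrite -/(relay_rate c (U j) Rp); set r := relay_rate c (U j) Rp.
set U' := fun k0 => if k0 == j then _ else _.
case: eqP => _ /=; last have [-> ->] := IH (Rp - r) U' kjs; by rewrite /U' kj.
Qed.

Lemma sum_update_notin j js (a : R) (F : nat -> R) : j \notin js ->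
  \sum_(k <- js) (if k == j then a else F k) = \sum_(k <- js) F k.
Proof. by move=> jNjs; apply: eq_big_seq => k /(memPn jNjs)/negbTE->. Qed.

Lemma sub_inner_residual_sum js Rp U : uniq js ->
  \sum_(k <- js) (inner js Rp U).2 k
  = \sum_(k <- js) U k - c * \sum_(k <- js) (inner js Rp U).1 k.
Proof.
elim: js Rp U => [|j js IH] Rp U /=; first by rewrite !big_nil mulr0 subr0.
move=> /andP[jNjs js_uniq]; rewrite !big_cons eqxx !sum_update_notin //.
rewrite -/(relay_rate c (U j) Rp); set r := relay_rate c (U j) Rp.
set U' := fun k0 => if k0 == j then _ else _.
case: eqP => _ /=; first by rewrite /U' eqxx sum_update_notin // big1_eq; lra.
have [_ ->] := sub_inner_notin (Rp - r) U' jNjs.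
by rewrite IH // /U' eqxx sum_update_notin //; lra.
Qed.

Lemma sub_inner_row_le js Rp U :
  uniq js -> {in js, forall k, 0 <= U k} -> 0 <= Rp ->
  \sum_(k <- js) (inner js Rp U).1 k <= Rp.
Proof.
elim: js Rp U => [|j js IH] Rp U /=; first by rewrite big_nil.
move=> /andP[jNjs js_uniq] U_ge0 Rp_ge0; rewrite big_cons eqxx sum_update_notin //.
rewrite -/(relay_rate c (U j) Rp); set r := relay_rate c (U j) Rp.
have [r_le _] := relay_rate_bounds c (U_ge0 j (mem_head _ _)) Rp_ge0.
case: eqP => _ /=; first by rewrite big1_eq addr0.
rewrite -lerBrDl IH ?subr_ge0 // => k kjs.
by rewrite (negbTE (memPn jNjs k kjs)) U_ge0 // inE kjs orbT.
Qed.

Lemma sub_inner_residual_ge0 js Rp U :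
  uniq js -> {in js, forall k, 0 <= U k} -> 0 <= Rp ->
  {in js, forall k, 0 <= (inner js Rp U).2 k}.
Proof.
elim: js Rp U => [|j js IH] Rp U //=.
move=> /andP[jNjs js_uniq] U_ge0 Rp_ge0.
rewrite -/(relay_rate c (U j) Rp); set r := relay_rate c (U j) Rp.
set U' := fun k0 => if k0 == j then _ else _.
have [r_le Uj_ge0] := relay_rate_bounds c (U_ge0 j (mem_head _ _)) Rp_ge0.
have U'_ge0 : {in j :: js, forall k, 0 <= U' k}.
  by move=> k k_in; rewrite /U'; case: eqP => // _; apply: U_ge0.
case: eqP => _ /= k; first exact: U'_ge0.
rewrite inE => /predU1P[-> | kjs].
  by have [_ ->] := sub_inner_notin (Rp - r) U' jNjs; apply: U'_ge0; rewrite mem_head.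
apply: IH; rewrite ?subr_ge0 // => k' k'js.
by apply: U'_ge0; rewrite inE k'js orbT.
Qed.

Lemma sub_inner_exhausted js Rp U :
  uniq js -> {in js, forall k, 0 <= U k} -> 0 <= Rp -> js != [::] ->
  \sum_(k <- js) (inner js Rp U).1 k = Rp
  \/ 0 < c /\ {in js, forall k, (inner js Rp U).2 k = 0}.
Proof.
elim: js Rp U => [|j js IH] Rp U //=.
move=> /andP[jNjs js_uniq] U_ge0 Rp_ge0 _.
rewrite big_cons eqxx sum_update_notin //.
rewrite -/(relay_rate c (U j) Rp); set r := relay_rate c (U j) Rp.
set U' := fun k0 => if k0 == j then _ else _.
have [r_le _] := relay_rate_bounds c (U_ge0 j (mem_head _ _)) Rp_ge0.
case: eqP => [Rp_r | Rp_r] /=; first by left; rewrite big1_eq; lra.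
have r_neq : r != Rp by apply/eqP => r_eq; apply: Rp_r; rewrite r_eq subrr.
have [c_gt0 Uj_sat] := relay_rate_saturates (U_ge0 j (mem_head _ _)) Rp_ge0 r_neq.
have [_ U'j] := sub_inner_notin (Rp - r) U' jNjs.
have U'_ge0 : {in js, forall k, 0 <= U' k}.
  by move=> k kjs; rewrite /U' (negbTE (memPn jNjs k kjs)) U_ge0 // inE kjs orbT.
have [-> | js_nil] := eqVneq js [::].
  by right; split=> // k; rewrite inE => /eqP->; rewrite /= /U' eqxx.
have Rp'_ge0 : 0 <= Rp - r by rewrite subr_ge0.
have [row_eq | [_ res0]] := IH (Rp - r) U' js_uniq U'_ge0 Rp'_ge0 js_nil.
  by left; rewrite row_eq; lra.
right; split=> // k; rewrite inE => /predU1P[-> | /res0 //].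
by rewrite U'j /U' eqxx.
Qed.

Lemma sub_inner_row_sum js Rp U :
  uniq js -> {in js, forall k, 0 <= U k} -> 0 <= Rp -> js != [::] ->
  (0 < c -> c * Rp <= \sum_(k <- js) U k) ->
  \sum_(k <- js) (inner js Rp U).1 k = Rp.
Proof.
move=> js_uniq U_ge0 Rp_ge0 js_nil cover.
have [// | [c_gt0 res0]] := sub_inner_exhausted js_uniq U_ge0 Rp_ge0 js_nil.
apply/le_anti; rewrite sub_inner_row_le //= -(ler_pM2l c_gt0).
have := sub_inner_residual_sum Rp U js_uniq; rewrite big1_seq => [|k /andP[_ /res0]//].
by have := cover c_gt0; lra.
Qed.

End InnerLoop.

Section OuterLoop.
Variables (R : realFieldType) (n : nat) (Rs : nat -> R).
Local Notation c := (n%:R - 2 : R).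

Lemma sub_outer_rows ids U : (0 < n)%N -> uniq ids ->
  {in ids, forall i, 0 <= Rs i} -> {in iota 0 n, forall k, 0 <= U k} ->
  c * \sum_(i <- ids) Rs i <= \sum_(k <- iota 0 n) U k ->
  {in ids, forall i, \sum_(k <- iota 0 n) (sub_outer n Rs ids U).1 i k = Rs i}.
Proof.
move=> n_gt0; elim: ids U => [|i ids IH] U //= /andP[iNids ids_uniq] Rs_ge0 U_ge0.
rewrite big_cons mulrDr => cover.
set p := sub_inner n (iota 0 n) (Rs i) U.
have Rsi_ge0 : 0 <= Rs i by apply: Rs_ge0; rewrite mem_head.
have rest_ge0 : 0 <= \sum_(l <- ids) Rs l.
  by rewrite big_seq sumr_ge0 // => l lids; apply: Rs_ge0; rewrite inE lids orbT.
have iota_nil : iota 0 n != [::] by rewrite -size_eq0 size_iota -lt0n.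
have row_i : \sum_(k <- iota 0 n) p.1 k = Rs i.
  apply: sub_inner_row_sum; rewrite ?iota_uniq // => c_gt0.
  have : 0 <= c * \sum_(l <- ids) Rs l by rewrite mulr_ge0 // ltW.
  lra.
move=> k; rewrite inE => /predU1P[-> | kids]; first by rewrite eqxx.
rewrite (negbTE (memPn iNids k kids)); apply: IH => //.
- by move=> l lids; apply: Rs_ge0; rewrite inE lids orbT.
- by apply: sub_inner_residual_ge0; rewrite ?iota_uniq.
- by rewrite sub_inner_residual_sum ?iota_uniq // row_i; lra.
Qed.

End OuterLoop.

Theorem propositionB3 (R : realFieldType) (n : nat) (Cu Cd Rs : nat -> R) :
  (1 <= n)%N ->
  (forall i, (i < n)%N -> 0 < Cu i) ->
  (forall i, (i < n)%N -> 0 < Cd i) ->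
  (forall i, (i < n)%N -> 0 < Rs i) ->
  (forall i, (i < n)%N -> Rs i <= Cu i) ->
  (forall i, (i < n)%N -> \sum_(j < n | (j : nat) != i) Rs j <= Cd i) ->
  (n%:R - 1) * (\sum_(i < n) Rs i) <= \sum_(i < n) Cu i ->
  forall i, (i < n)%N -> \sum_(j < n) substream_rates n Cu Rs i j = Rs i.
Proof.
move=> n_gt0 _ _ Rs_gt0 Rs_le_Cu _ aggregate i i_lt_n.
have sum_iota (F : nat -> R) : \sum_(j < n) F j = \sum_(j <- iota 0 n) F j.
  by rewrite -(big_mkord xpredT) /index_iota subn0.
rewrite sum_iota; apply: sub_outer_rows; rewrite ?iota_uniq ?mem_iota //.
- by move=> l; rewrite mem_iota => /andP[_ /Rs_gt0/ltW].
- by move=> l; rewrite mem_iota subr_ge0 => /andP[_ /Rs_le_Cu].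
- rewrite big_split /= sumrN -!sum_iota; lra.
Qed.
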